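(* Let $f=\sum a_nq^n\in S_k(\Gamma_1(N_f),\epsilon_f)$ and $g=\sum b_nq^n\in S_k(\Gamma_1(N_g),\epsilon_g)$ be normalized cuspidal Hecke eigenforms of the same weight $k$, with $p\nmid N_fN_g$, whose coefficients and character values lie in $\mathcal{O}$. If $f$ and $g$ are $p^r$-congruent, i.e. $a_m\equiv b_m\bmod p^r\mathcal{O}$ for all integers $m$ coprime to $N_fN_g$, then $\epsilon_f(p)\equiv\epsilon_g(p)\bmod p^r\mathcal{O}$.
   Context: $p$ is an odd prime with a fixed embedding $\overline{\mathbb{Q}}\hookrightarrow\mathbb{C}_p$; $E/\mathbb{Q}_p$ is a finite extension containing all Fourier coefficients of $f,g$ and values of $\epsilon_f,\epsilon_g$, and $\mathcal{O}$ is its ring of integers; $r$ is a positive integer. *)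

From HB Require Import structures.
From mathcomp Require Import all_boot all_order all_algebra all_field.
From mathcomp Require Import all_classical all_reals.
From mathcomp Require Import all_analysis.
From mathcomp Require Import complex.
Set Implicit Arguments. Unset Strict Implicit. Unset Printing Implicit Defensive.
Import Order.TTheory GRing.Theory Num.Theory.
Local Open Scope ring_scope.

(* p-adic side.  A fixed embedding  Qbar -> C_p  is encoded by the induced   *)
(* absolute value on Qbar = algC: a non-archimedean absolute value with      *)
(* |p| = 1/p (such absolute values correspond exactly to embeddings of Qbar  *)
(* into C_p, up to the action of Gal(C_p/Q_p), which does not change |.|).   *)
Definition padic_abs (p : nat) (v : algC -> algC) : Prop :=
  [/\ forall x, 0 <= v x,
      forall x, v x = 0 <-> x = 0,
      forall x y, v (x * y) = v x * v y,
      forall x y, v (x + y) <= v x \/ v (x + y) <= v y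
    & v (p%:R) = (p%:R)^-1 ].

(* x lies in the valuation ring O (integral at the fixed prime above p). *)
Definition p_integral (v : algC -> algC) (x : algC) : Prop := v x <= 1.

(* For x, y in O:  x = y mod p^r O  iff  |x - y|_p <= |p^r|_p. *)
Definition congr_pr (v : algC -> algC) (p r : nat) (x y : algC) : Prop :=
  v (x - y) <= v ((p%:R) ^+ r).

Definition dirichlet_char (N : nat) (eps : int -> algC) : Prop :=
  [/\ eps 1 = 1,
      forall m n : int, eps (m * n) = eps m * eps n,
      forall n : int, eps (n + N%:Z) = eps n
    & forall n : int, (eps n != 0) = coprimez n N%:Z ].

Section ComplexSide.
Variable R : realType.
Local Notation C := R[i].
Local Open Scope complex_scope.

Definition cabs (z : C) : R := ComplexField.Normc.normc z.

Definition upper (z : C) : Prop := 0 < complex.Im z.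

Definition cexp (z : C) : C :=
  ((expR (complex.Re z))%:C * (cos (complex.Im z) +i* sin (complex.Im z)))%R.

Definition qpow (n : nat) (z : C) : C := cexp ((2 * pi)%:C * 'i * n%:R * z)%R.

Definition holomorphic_H (f : C -> C) : Prop :=
  forall z, upper z -> exists L : C,
    forall e : R, 0 < e -> exists d : R, 0 < d /\
      forall w, upper w -> cabs (w - z) < d ->
        cabs (f w - f z - L * (w - z)) <= e * cabs (w - z).

Definition mob (a b c d : int) (z : C) : C :=
  ((a%:~R * z + b%:~R) / (c%:~R * z + d%:~R))%R.

Definition slash (k : nat) (a b c d : int) (f : C -> C) (z : C) : C :=
  (((c%:~R * z + d%:~R) ^- k) * f (mob a b c d z))%R.

(* f in S_k(Gamma_1(N), eps), where the character is viewed in C via iota *)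
Definition cusp_form (iota : {rmorphism algC -> C}) (k N : nat)
    (eps : int -> algC) (f : C -> C) : Prop :=
  [/\ holomorphic_H f,
      (* modularity for Gamma_0(N) with nebentypus eps *)
      forall a b c d : int, a * d - b * c = 1 -> (N%:Z %| c)%Z ->
        forall z, upper z ->
          f (mob a b c d z) = (iota (eps d) * (c%:~R * z + d%:~R) ^+ k * f z)%R
    & (* vanishing at every cusp *)
      forall a b c d : int, a * d - b * c = 1 ->
        forall e : R, 0 < e -> exists M : R, forall z, upper z -> M < complex.Im z ->
          cabs (slash k a b c d f z) < e ].

Definition q_expansion (f : C -> C) (an : nat -> C) : Prop :=
  forall z, upper z -> forall e : R, 0 < e -> exists M : nat, forall n, (M <= n)%N ->
    cabs (f z - \sum_(0 <= m < n) an m * qpow m z)%R < e.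

(* Hecke operator T_n on q-expansions for S_k(Gamma_1(N), eps):
   a_m(T_n f) = sum_{d | (m,n)} eps(d) d^{k-1} a_{mn/d^2}. *)
Definition hecke_coef (iota : {rmorphism algC -> C}) (k : nat)
    (eps : int -> algC) (an : nat -> C) (n m : nat) : C :=
  (\sum_(d <- divisors (gcdn m n))
      iota (eps d%:Z) * (d%:R) ^+ (k.-1) * an ((m * n) %/ (d * d))%N)%R.

Definition normalized_eigenform (iota : {rmorphism algC -> C}) (k : nat)
    (eps : int -> algC) (an : nat -> C) : Prop :=
  an 1%N = 1 /\
  exists lam : nat -> C, forall n m, (0 < n)%N -> (0 < m)%N ->
    hecke_coef iota k eps an n m = (lam n * an m)%R.

End ComplexSide.

From HB Require Import structures.
From mathcomp Require Import all_boot all_order all_algebra all_field.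
From mathcomp Require Import all_classical all_reals.
From mathcomp Require Import all_analysis.
From mathcomp Require Import complex.
From mathcomp Require Import ring.
Set Implicit Arguments. Unset Strict Implicit.
Import Order.TTheory GRing.Theory Num.Theory.
Local Open Scope ring_scope.

(* For a prime q ∤ N_f N_g p, comparing the coefficients of q and q^2 of the
   Hecke eigenforms gives a_q^2 - a_{q^2} = ε_f(q) q^(k-1) and the same for g;
   since q is a p-adic unit, ε_f(q) ≡ ε_g(q) mod p^r.  Both characters are
   completely multiplicative, so the congruence spreads to every l coprime to
   N_f N_g p, and ε(p) = ε(p + N_f N_g) with p + N_f N_g such an l. *)

Section PadicAbs.
Variables (p : nat) (v : algC -> algC).
Hypothesis hv : padic_abs p v.

Lemma padic_abs_ge0 x : 0 <= v x.
Proof. by case: hv. Qed.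

Lemma padic_abs0 : v 0 = 0.
Proof. by case: hv => _ v_eq0 _ _ _; apply/v_eq0. Qed.

Lemma padic_absM x y : v (x * y) = v x * v y.
Proof. by case: hv. Qed.

Lemma padic_abs1 : v 1 = 1.
Proof.
have v1_neq0 : v 1 != 0.
  by apply/eqP; case: hv => _ v_eq0 _ _ _ /v_eq0 /eqP; rewrite oner_eq0.
by apply: (mulfI v1_neq0); rewrite -padic_absM !mulr1.
Qed.

Lemma padic_absN x : v (- x) = v x.
Proof.
have vN1 : v (-1) = 1.
  apply/eqP; rewrite -sqrp_eq1 ?padic_abs_ge0 //.
  by rewrite expr2 -padic_absM mulrNN mulr1 padic_abs1.
by rewrite -mulN1r padic_absM vN1 mul1r.
Qed.

Lemma padic_absD_le c x y : v x <= c -> v y <= c -> v (x + y) <= c.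
Proof. by case: hv => _ _ _ ultra _ vx vy; case: (ultra x y) => /le_trans; apply. Qed.

Lemma padic_absB_le c x y : v x <= c -> v y <= c -> v (x - y) <= c.
Proof. by move=> vx vy; apply: padic_absD_le; rewrite ?padic_absN. Qed.

Lemma padic_abs_nat_le1 n : v n%:R <= 1.
Proof.
elim: n => [|n IHn]; first by rewrite padic_abs0 ler01.
by rewrite -addn1 natrD padic_absD_le // padic_abs1.
Qed.

Lemma padic_absX x n : v (x ^+ n) = v x ^+ n.
Proof.
by elim: n => [|n IHn]; rewrite ?padic_abs1 // !exprS padic_absM IHn.
Qed.

(* A Bezout relation w p - u q = 1 forces |u q| = 1, because |w p| <= 1/p < 1. *)
Lemma padic_abs_coprime q : prime p -> coprime q p -> v q%:R = 1.
Proof.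
move=> p_prime coprime_qp.
have [u _ /dvdnP [w Bezout_uw]] := Bezoutl q (prime_gt0 p_prime).
rewrite gcdnC (eqP coprime_qp) in Bezout_uw.
have one_eq : (w * p)%:R - (u * q)%:R = 1 :> algC by rewrite -Bezout_uw natrD addrK.
have vp : v p%:R = (p%:R)^-1 by case: hv.
have p_inv_lt1 : (p%:R : algC)^-1 < 1 by rewrite invf_lt1 ?ltr1n ?ltr0n ?prime_gt1 ?prime_gt0.
apply/eqP; rewrite eq_le padic_abs_nat_le1 /=.
have [vwp_ge1 | vuq_ge1] : 1 <= v (w * p)%:R \/ 1 <= v (u * q)%:R.
  case: hv => _ _ _ ultra _.
  by have := ultra (w * p)%:R (- (u * q)%:R); rewrite one_eq padic_abs1 padic_absN.
- have vwp_lt1 : v (w * p)%:R < 1.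
    rewrite natrM padic_absM vp; apply: le_lt_trans p_inv_lt1.
    by rewrite ler_piMl ?invr_ge0 ?ler0n ?padic_abs_nat_le1.
  by have := le_lt_trans vwp_ge1 vwp_lt1; rewrite ltxx.
- apply: le_trans vuq_ge1 _.
  by rewrite natrM padic_absM ler_piMl ?padic_abs_ge0 ?padic_abs_nat_le1.
Qed.

Variable r : nat.
Local Notation congr := (congr_pr v p r).

Lemma congr_pr_refl x : congr x x.
Proof. by rewrite /congr_pr subrr padic_abs0 padic_abs_ge0. Qed.

Lemma congr_prB x1 y1 x2 y2 : congr x1 y1 -> congr x2 y2 -> congr (x1 - x2) (y1 - y2).
Proof.
move=> c1 c2; rewrite /congr_pr.
rewrite (_ : x1 - x2 - (y1 - y2) = (x1 - y1) - (x2 - y2)); last by ring.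
exact: padic_absB_le.
Qed.

Lemma congr_prM x1 y1 x2 y2 : p_integral v x1 -> p_integral v y2 ->
  congr x1 y1 -> congr x2 y2 -> congr (x1 * x2) (y1 * y2).
Proof.
move=> int_x1 int_y2 c1 c2; rewrite /congr_pr.
rewrite (_ : x1 * x2 - y1 * y2 = x1 * (x2 - y2) + (x1 - y1) * y2); last by ring.
apply: padic_absD_le; rewrite padic_absM.
  exact: le_trans (ler_piMl (padic_abs_ge0 _) int_x1) c2.
exact: le_trans (ler_piMr (padic_abs_ge0 _) int_y2) c1.
Qed.

Lemma congr_pr_mulIr u x y : v u = 1 -> congr (x * u) (y * u) -> congr x y.
Proof. by move=> vu; rewrite /congr_pr -mulrBl padic_absM vu mulr1. Qed.

End PadicAbs.

Lemma divisors_prime q : prime q -> divisors q = [:: 1%N; q].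
Proof.
move=> q_prime; apply: (irr_sorted_eq ltn_trans ltnn (sorted_divisors_ltn q)).
  by rewrite /= andbT prime_gt1.
move=> d; rewrite -dvdn_divisors ?prime_gt0 // !inE.
case/primeP: q_prime => _ dvd_q; apply/idP/orP => [/dvd_q/orP //|].
by case=> /eqP ->; rewrite ?dvd1n ?dvdnn.
Qed.

(* Compare the coefficients of index 1 and q in T_q f = λ_q f, using a_1 = 1. *)
Lemma normalized_eigenform_coef_prime_sq (R : realType)
    (iota : {rmorphism algC -> R[i]}) k (eps : int -> algC) (a : nat -> algC) q :
  eps 1 = 1 -> normalized_eigenform iota k eps (fun n => iota (a n)) -> prime q ->
  a q * a q = a (q * q)%N + eps q%:Z * q%:R ^+ k.-1.
Proof.
move=> eps1 [a1 [lam hecke]] q_prime; have q_gt0 := prime_gt0 q_prime.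
have T_q_a1 := hecke q 1%N q_gt0 isT.
rewrite /hecke_coef gcd1n big_seq1 mul1n divn1 eps1 rmorph1 expr1n !mul1r in T_q_a1.
rewrite a1 mulr1 in T_q_a1.
have T_q_aq := hecke q q q_gt0 q_gt0.
rewrite /hecke_coef gcdnn divisors_prime // big_cons big_seq1 muln1 divn1 in T_q_aq.
rewrite divnn muln_gt0 q_gt0 eps1 rmorph1 expr1n !mul1r a1 mulr1 -T_q_a1 in T_q_aq.
by apply: (fmorph_inj iota); rewrite rmorphD !rmorphM rmorphXn rmorph_nat T_q_aq.
Qed.

Lemma dirichlet_char_dvd_period N eps M n :
  dirichlet_char N eps -> (N %| M)%N -> eps (n + M%:Z) = eps n.
Proof.
case=> _ _ periodic _ /dvdnP [j ->]; elim: j => [|j IHj]; first by rewrite addr0.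
by rewrite mulSn PoszD addrA addrAC periodic.
Qed.

Lemma congr_pr_completely_multiplicative p r v M (e1 e2 : int -> algC) :
  padic_abs p v -> e1 1 = 1 -> e2 1 = 1 ->
  {morph e1 : m n / m * n} -> {morph e2 : m n / m * n} ->
  (forall n, p_integral v (e1 n)) -> (forall n, p_integral v (e2 n)) ->
  (forall q, prime q -> coprime q M -> congr_pr v p r (e1 q%:Z) (e2 q%:Z)) ->
  forall l, (0 < l)%N -> coprime l M -> congr_pr v p r (e1 l%:Z) (e2 l%:Z).
Proof.
move=> hv e1_1 e2_1 e1M e2M int_e1 int_e2 congr_prime.
elim/ltn_ind => l IHl l_gt0.
have [-> | l_neq1] := eqVneq l 1%N; first by rewrite e1_1 e2_1 => _; apply: congr_pr_refl.
have q_prime : prime (pdiv l) by rewrite pdiv_prime // ltn_neqAle eq_sym l_neq1.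
have l_eq : l = (l %/ pdiv l * pdiv l)%N by rewrite divnK ?pdiv_dvd.
have m_lt_l : (l %/ pdiv l < l)%N by rewrite ltn_Pdiv ?prime_gt1.
have m_gt0 : (0 < l %/ pdiv l)%N by move: l_gt0; rewrite {1}l_eq muln_gt0 => /andP[].
rewrite l_eq coprimeMl PoszM e1M e2M => /andP[coprime_m coprime_q].
by apply: (congr_prM hv); [| | exact: IHl | exact: congr_prime].
Qed.

Lemma congr_pr_of_coef_sq_relation p r v q k (ef eg aq aqq bq bqq : algC) :
  padic_abs p v -> prime p -> coprime q p ->
  aq * aq = aqq + ef * q%:R ^+ k -> bq * bq = bqq + eg * q%:R ^+ k ->
  p_integral v aq -> p_integral v bq ->
  congr_pr v p r aq bq -> congr_pr v p r aqq bqq -> congr_pr v p r ef eg.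
Proof.
move=> hv p_prime coprime_qp a_rel b_rel int_aq int_bq congr_q congr_qq.
apply: (@congr_pr_mulIr _ _ hv _ (q%:R ^+ k)).
  by rewrite (padic_absX hv) (padic_abs_coprime hv) // expr1n.
have ef_eq : ef * q%:R ^+ k = aq * aq - aqq by rewrite a_rel addrC addKr.
have eg_eq : eg * q%:R ^+ k = bq * bq - bqq by rewrite b_rel addrC addKr.
by rewrite ef_eq eg_eq; apply: (congr_prB hv) => //; apply: (congr_prM hv).
Qed.

Unset Implicit Arguments.

Theorem lemma4p3
  (p r k Nf Ng : nat) (v : algC -> algC)
  (R : realType) (iota : {rmorphism algC -> R[i]})
  (epsf epsg : int -> algC) (f g : R[i] -> R[i]) (a b : nat -> algC) :
  prime p -> odd p -> (0 < r)%N ->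
  padic_abs p v ->
  (0 < Nf)%N -> (0 < Ng)%N -> ~~ (p %| Nf * Ng)%N ->
  dirichlet_char Nf epsf -> dirichlet_char Ng epsg ->
  cusp_form iota k Nf epsf f -> cusp_form iota k Ng epsg g ->
  q_expansion f (fun n => iota (a n)) -> q_expansion g (fun n => iota (b n)) ->
  normalized_eigenform iota k epsf (fun n => iota (a n)) ->
  normalized_eigenform iota k epsg (fun n => iota (b n)) ->
  (forall n, p_integral v (a n)) -> (forall n, p_integral v (b n)) ->
  (forall n, p_integral v (epsf n)) -> (forall n, p_integral v (epsg n)) ->
  (forall m : nat, (0 < m)%N -> coprime m (Nf * Ng) -> congr_pr v p r (a m) (b m)) ->
  congr_pr v p r (epsf p%:Z) (epsg p%:Z).
Proof.
move=> p_prime _ _ hv _ _ p_ndvd_N chf chg _ _ _ _ eigf eigg int_a int_b int_ef int_eg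
  congr_ab.
have [ef1 efM _ _] := chf; have [eg1 egM _ _] := chg.
have congr_eps_prime q : prime q -> coprime q (Nf * Ng * p) ->
    congr_pr v p r (epsf q%:Z) (epsg q%:Z).
  rewrite coprimeMr => q_prime /andP[coprime_qN coprime_qp].
  have q_gt0 := prime_gt0 q_prime.
  apply: (congr_pr_of_coef_sq_relation hv p_prime coprime_qp
    (normalized_eigenform_coef_prime_sq ef1 eigf q_prime)
    (normalized_eigenform_coef_prime_sq eg1 eigg q_prime)) => //.
    exact: congr_ab.
  by apply: congr_ab; rewrite ?muln_gt0 ?q_gt0 // coprimeMl coprime_qN.
have coprime_pN : coprime (p + Nf * Ng) (Nf * Ng * p).
  rewrite coprime_sym coprimeMl /coprime gcdnDr gcdnDl gcdnC.
  by rewrite -/(coprime p _) prime_coprime ?p_ndvd_N.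
rewrite -(dirichlet_char_dvd_period _ chf (dvdn_mulr Ng (dvdnn Nf))).
rewrite -(dirichlet_char_dvd_period _ chg (dvdn_mull Nf (dvdnn Ng))) -PoszD.
apply: (congr_pr_completely_multiplicative hv ef1 eg1 efM egM int_ef int_eg
  congr_eps_prime) => //.
by rewrite addn_gt0 prime_gt0.
Qed.
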